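(* Let $M=\begin{pmatrix} a&b\\ 0&d\end{pmatrix}$ with $a,d$ having generalized core-EP inverses. If $a^{\pi}b=0$, then $M$ has a generalized core-EP inverse in $M_2(\mathcal{A})$ and $M^{\mathrm{gcEP}}=\begin{pmatrix} a^{\mathrm{gcEP}}&-a^{\mathrm{gcEP}}bd^{\mathrm{gcEP}}\\ 0&d^{\mathrm{gcEP}}\end{pmatrix}$.
   Context: $\mathcal{A}$ is a Banach algebra (a complex Banach *-algebra with identity, as in the whole paper), $M_2(\mathcal{A})$ the $2\times2$ matrices over $\mathcal{A}$. The generalized core-EP inverse of $a$ is the unique $x$ with $ax^2=x$, $(ax)^*=ax$, $\lim_{n\to\infty}\|a^n-xa^{n+1}\|^{1/n}=0$, denoted $a^{\mathrm{gcEP}}$. $a^{\pi}=1-aa^d$, with $a^d$ the generalized Drazin inverse. *)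

From HB Require Import structures.
From mathcomp Require Import all_boot all_order all_algebra.
From mathcomp Require Import complex.
From mathcomp Require Import all_classical all_reals all_analysis.

Set Implicit Arguments.
Unset Strict Implicit.
Unset Printing Implicit Defensive.

Import Order.TTheory GRing.Theory Num.Theory.
Import numFieldNormedType.Exports.
Local Open Scope ring_scope.
Local Open Scope classical_set_scope.

Definition is_banach_star_algebra (R : realType) (A : unitAlgType R[i])
    (nrm : A -> R) (star : A -> A) : Prop :=
  [/\
      [/\ (forall x, 0 <= nrm x),
          (forall x, nrm x = 0 -> x = 0),
          (forall x y, nrm (x + y) <= nrm x + nrm y) &
          (forall (c : R[i]) x, ((nrm (c *: x))%:C)%C = `|c| * ((nrm x)%:C)%C)],
      (forall x y, nrm (x * y) <= nrm x * nrm y),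
      (forall u : nat -> A,
          (forall e : R, 0 < e -> exists N : nat, forall m n : nat,
              (N <= m)%N -> (N <= n)%N -> nrm (u m - u n) < e) ->
          exists l : A, forall e : R, 0 < e -> exists N : nat, forall n : nat,
              (N <= n)%N -> nrm (u n - l) < e) &
      [/\ (forall x y, star (x + y) = star x + star y),
          (forall (c : R[i]) x, star (c *: x) = (c^*)%C *: star x),
          (forall x y, star (x * y) = star y * star x) &
          (forall x, star (star x) = x)]].

Definition is_gcEP (R : realType) (T : pzRingType) (nrm : T -> R)
    (star : T -> T) (a x : T) : Prop :=
  [/\ a * x ^+ 2 = x,
      star (a * x) = a * x &
      (fun n : nat => powR (nrm (a ^+ n - x * a ^+ n.+1)) (n%:R^-1))
        @ \oo --> (0 : R)].

(** Quasinilpotent: spectrum is {0}, i.e. [lambda - q] invertible for every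
    nonzero complex [lambda]. *)
Definition quasinilpotent (R : realType) (A : unitAlgType R[i]) (q : A) : Prop :=
  forall lambda : R[i], lambda != 0 -> (lambda%:A - q) \is a GRing.unit.

Definition is_gDrazin (R : realType) (A : unitAlgType R[i]) (a x : A) : Prop :=
  [/\ x * a * x = x, a * x = x * a & quasinilpotent (a - a ^+ 2 * x)].

Definition mx2 (T : Type) (p q r s : T) : 'M[T]_2 :=
  \matrix_(i < 2, j < 2)
     if (i : nat) == 0%N then (if (j : nat) == 0%N then p else q)
     else (if (j : nat) == 0%N then r else s).

Definition mxstar (T : Type) (star : T -> T) (M : 'M[T]_2) : 'M[T]_2 :=
  \matrix_(i < 2, j < 2) star (M j i).

(** Norm on M_2(A): maximal row sum of entry norms (a Banach algebra norm;
    any two Banach algebra norms on M_2(A) are equivalent, and the gcEP limit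
    condition does not depend on the choice). *)
Definition mxnorm (R : realType) (T : Type) (nrm : T -> R) (M : 'M[T]_2) : R :=
  \big[Num.max/0]_(i < 2) \sum_(j < 2) nrm (M i j).

(* For [M = mx2 a b 0 d] and the candidate inverse [X], the product [M X] is
   the diagonal matrix of the projections [a xa] and [d xd] as soon as
   [a xa b = b]; this gives [M X^2 = X]
   and the symmetry of [M X]. If moreover [xa a] fixes the corner of every
   power [M^n], the residual [M^n - X M^(n+1)] is triangular with the residuals
   of [a] and [d] on the diagonal and [- xa b (d^n - xd d^(n+1))] in the corner,
   so its norm decays geometrically. Both facts come from [xa a ad = ad]:
   [ad - xa a ad = (a^k - xa a^(k+1)) ad^(k+1)] for every [k], so its norm is
   below [e^k (|ad| + 1)^(k+1)] for every [e > 0]; and [a^pi b = 0] puts [b],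
   hence every corner, in the range of the idempotent [a ad]. *)

From HB Require Import structures.
From mathcomp Require Import all_boot all_order all_algebra.
From mathcomp Require Import complex.
From mathcomp Require Import all_classical all_reals all_analysis.
Import Order.TTheory GRing.Theory Num.Theory.
Import numFieldNormedType.Exports.
Local Open Scope ring_scope.
Local Open Scope classical_set_scope.

Definition geometric_decay {R : realType} (u : nat -> R) :=
  forall e : R, 0 < e -> \forall n \near \oo, u n <= e ^+ n.

Section GeometricDecay.
Context {R : realType}.
Implicit Types u v w : nat -> R.

Lemma root_cvg0P u : (forall n, 0 <= u n) ->
  (fun n : nat => powR (u n) n%:R^-1) @ \oo --> (0 : R) <-> geometric_decay u.
Proof.
move=> u_ge0; split.
- move=> /cvgrPdist_lt root_u e e_gt0.
  near=> n.
  have n_gt0 : (0 < n)%N by near: n; exact: nbhs_infty_gt.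
  have : `|0 - powR (u n) n%:R^-1| < e by near: n; exact: root_u.
  rewrite sub0r normrN ger0_norm ?powR_ge0 // => root_lt.
  have -> : u n = powR (powR (u n) n%:R^-1) n%:R.
    by rewrite -powRrM mulVf ?powRr1 // pnatr_eq0 -lt0n.
  rewrite powR_mulrn ?powR_ge0 //.
  by apply: lerXn2r; rewrite ?nnegrE ?powR_ge0 ?ltW.
- move=> decay_u; apply/cvgrPdist_lt => e e_gt0.
  have e2_gt0 : 0 < e / 2 by rewrite divr_gt0.
  have e2_lt : e / 2 < e by rewrite ltr_pdivrMr // ltr_pMr // ltr1n.
  near=> n.
  have n_gt0 : (0 < n)%N by near: n; exact: nbhs_infty_gt.
  rewrite sub0r normrN ger0_norm ?powR_ge0 //.
  apply: le_lt_trans e2_lt.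
  have -> : e / 2 = powR ((e / 2) ^+ n) n%:R^-1.
    by rewrite -powR_mulrn ?ltW // -powRrM mulfV ?powRr1 ?ltW // pnatr_eq0 -lt0n.
  apply: ge0_ler_powR;
    rewrite ?nnegrE ?invr_ge0 ?ler0n ?u_ge0 ?exprn_ge0 ?(ltW e2_gt0) //.
  by near: n; exact: decay_u.
Unshelve. all: by end_near.
Qed.

Lemma geometric_decay_le u v w (C : R) : 0 <= C ->
  (forall n, u n <= v n + C * w n) ->
  geometric_decay v -> geometric_decay w -> geometric_decay u.
Proof.
move=> C_ge0 le_uvw decay_v decay_w e e_gt0.
have C1_gt0 : 0 < 1 + C by rewrite ltr_pwDl.
have e'_gt0 : 0 < e / (1 + C) by rewrite divr_gt0.
near=> n.
apply: (le_trans (le_uvw n)).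
have -> : e ^+ n = (1 + C) ^+ n * (e / (1 + C)) ^+ n.
  by rewrite -exprMn mulrCA divff ?mulr1 // gt_eqF.
apply: (@le_trans _ _ ((1 + C) * (e / (1 + C)) ^+ n)).
  rewrite mulrDl mul1r lerD //; first by near: n; exact: decay_v.
  by rewrite ler_wpM2l //; near: n; exact: decay_w.
have n_gt0 : (0 < n)%N by near: n; exact: nbhs_infty_gt.
by rewrite ler_wpM2r ?exprn_ge0 ?(ltW e'_gt0) // ler_eXnr // lerDl.
Unshelve. all: by end_near.
Qed.

End GeometricDecay.

Section DrazinAlgebra.
Context {T : pzRingType} {a ad : T}.
Hypothesis ad_a_ad : ad * a * ad = ad.
Hypothesis a_ad_comm : a * ad = ad * a.

Lemma drazin_mulK : a * ad * ad = ad.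
Proof. by rewrite a_ad_comm. Qed.

Lemma drazin_expr_mul k : a ^+ k * ad ^+ k.+1 = ad.
Proof.
elim: k => [|k IH]; first by rewrite mul1r expr1.
have -> : a ^+ k.+1 * ad ^+ k.+2 = a ^+ k * (a * ad * ad) * ad ^+ k.
  by rewrite exprSr !exprS !mulrA.
by rewrite drazin_mulK -mulrA -exprS.
Qed.

Lemma drazin_exprS_mul k : a ^+ k.+1 * ad ^+ k.+1 = a * ad.
Proof. by rewrite exprS -mulrA drazin_expr_mul. Qed.

Section CoreOnRange.
Context {x y : T}.
Hypothesis x_a_ad : x * a * ad = ad.
Hypothesis y_in_range : a * ad * y = y.

Lemma core_range_mulKl : a * x * y = y.
Proof. by rewrite -y_in_range !mulrA -(mulrA a x) -(mulrA a (x * a)) x_a_ad. Qed.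

Lemma core_range_mulK : x * a * y = y.
Proof. by rewrite -y_in_range a_ad_comm !mulrA x_a_ad -a_ad_comm. Qed.

End CoreOnRange.
End DrazinAlgebra.

Section NormedRing.
Context {R : realType} {T : pzRingType} {nrm : T -> R}.
Hypothesis nrm_ge0 : forall x, 0 <= nrm x.
Hypothesis nrm_eq0 : forall x, nrm x = 0 -> x = 0.
Hypothesis nrm_mul_le : forall x y, nrm (x * y) <= nrm x * nrm y.

Lemma nrm_exprS_le (y : T) k : nrm (y ^+ k.+1) <= nrm y ^+ k.+1.
Proof.
elim: k => [|k IH]; first by rewrite !expr1.
rewrite exprS [leRHS]exprS.
by apply: (le_trans (nrm_mul_le _ _)); rewrite ler_wpM2l.
Qed.

(* With [q = nrm y + 1], the decay of [r] at [e = 1 / (2 q)] gives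
   [nrm c <= q / 2 ^ k] for large [k]. *)
Lemma geometric_decay_factor_eq0 {c : T} (y : T) {r : nat -> T} :
  geometric_decay (fun k => nrm (r k)) -> (forall k, c = r k * y ^+ k.+1) ->
  c = 0.
Proof.
move=> decay_r c_eq; apply: nrm_eq0; apply/eqP; rewrite eq_le nrm_ge0 andbT.
set q := nrm y + 1.
have q_gt0 : 0 < q by rewrite ltr_wpDl.
have e_gt0 : 0 < (2 * q)^-1 by rewrite invr_gt0 mulr_gt0.
have q2_cvg : geometric q 2^-1 @ \oo --> (0 : R).
  by apply: cvg_geometric; rewrite gtr0_norm ?invr_gt0 // invf_lt1 ?ltr1n.
apply: (ler_cvg_to (cvg_cst (nrm c)) q2_cvg); near=> k => /=.
rewrite {1}(c_eq k); apply: (le_trans (nrm_mul_le _ _)).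
have -> : q * 2^-1 ^+ k = (2 * q)^-1 ^+ k * q ^+ k.+1.
  rewrite invfM exprMn exprS mulrCA -mulrA -exprMn.
  by rewrite mulVf ?expr1n ?mulr1 ?gt_eqF.
apply: ler_pM; rewrite ?nrm_ge0 //; first by near: k; exact: decay_r.
apply: (le_trans (nrm_exprS_le y k)).
by apply: lerXn2r; rewrite ?nnegrE ?nrm_ge0 ?(ltW q_gt0) // lerDl.
Unshelve. all: by end_near.
Qed.

Lemma gcEP_mul_drazin {a x ad : T} :
  geometric_decay (fun n => nrm (a ^+ n - x * a ^+ n.+1)) ->
  ad * a * ad = ad -> a * ad = ad * a -> x * a * ad = ad.
Proof.
move=> decay_a ad_a_ad a_ad_comm; apply/eqP; rewrite eq_sym -subr_eq0; apply/eqP.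
apply: (geometric_decay_factor_eq0 ad decay_a) => k.
rewrite mulrBl (drazin_expr_mul ad_a_ad a_ad_comm) -[x * _ ^+ _ * _]mulrA.
by rewrite (drazin_exprS_mul ad_a_ad a_ad_comm) mulrA.
Qed.

End NormedRing.

Lemma mx2_mul (T : pzRingType) (p q r s p' q' r' s' : T) :
  mx2 p q r s * mx2 p' q' r' s' =
  mx2 (p * p' + q * r') (p * q' + q * s') (r * p' + s * r') (r * q' + s * s').
Proof.
rewrite -mulmxE; apply/matrixP => i j; rewrite !mxE big_ord_recl big_ord1 !mxE.
by case: i => [[|[|i]] Hi] //; case: j => [[|[|j]] Hj].
Qed.

Lemma mx2_sub (T : zmodType) (p q r s p' q' r' s' : T) :
  mx2 p q r s - mx2 p' q' r' s' = mx2 (p - p') (q - q') (r - r') (s - s').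
Proof.
apply/matrixP => i j; rewrite !mxE.
by case: i => [[|[|i]] Hi] //; case: j => [[|[|j]] Hj].
Qed.

Lemma mx2_1 (T : pzRingType) : mx2 1 0 0 1 = 1 :> 'M[T]_2.
Proof.
apply/matrixP => i j; rewrite !mxE.
by case: i => [[|[|i]] Hi] //; case: j => [[|[|j]] Hj].
Qed.

Lemma mxstar_mx2 (T : Type) (star : T -> T) (p q r s : T) :
  mxstar star (mx2 p q r s) = mx2 (star p) (star r) (star q) (star s).
Proof.
apply/matrixP => i j; rewrite !mxE.
by case: i => [[|[|i]] Hi] //; case: j => [[|[|j]] Hj].
Qed.

Lemma mxnorm_ge0 (R : realType) (T : Type) (nrm : T -> R) (M : 'M[T]_2) :
  0 <= mxnorm nrm M.
Proof. by rewrite /mxnorm !big_ord_recl !big_ord0 !le_max lexx !orbT. Qed.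

Lemma mxnorm_triu_le {R : realType} {T : zmodType} {nrm : T -> R} (p q s : T) :
  (forall x, 0 <= nrm x) -> nrm 0 = 0 ->
  mxnorm nrm (mx2 p q 0 s) <= nrm p + nrm q + nrm s.
Proof.
move=> nrm_ge0 nrm0.
rewrite /mxnorm !big_ord_recl !big_ord0 !mxE /= nrm0 !addr0 add0r !ge_max.
by rewrite lerDl nrm_ge0 lerDr !addr_ge0.
Qed.

Section TriangularPowers.
Context {T : pzRingType} (a b d : T).

Fixpoint triu_corner n : T :=
  if n is m.+1 then a * triu_corner m + b * d ^+ m else 0.

Lemma mx2_triu_expr n :
  mx2 a b 0 d ^+ n = mx2 (a ^+ n) (triu_corner n) 0 (d ^+ n).
Proof.
elim: n => [|n IH]; first by rewrite !expr0 mx2_1.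
by rewrite exprS IH mx2_mul /= !(mul0r, mulr0, addr0, add0r) -!exprS.
Qed.

Lemma triu_corner_fixed {e : T} :
  e * a = a * e -> e * b = b -> forall n, e * triu_corner n = triu_corner n.
Proof.
move=> ea_comm eb n; elim: n => [|n IH] /=; first by rewrite mulr0.
by rewrite mulrDr !mulrA ea_comm -mulrA IH eb.
Qed.

End TriangularPowers.

Section TriangularCore.
Variables (T : pzRingType) (a b d xa xd : T).

Lemma mx2_triu_core_residual n :
  xa * a * triu_corner a b d n = triu_corner a b d n ->
  mx2 a b 0 d ^+ n - mx2 xa (- (xa * b * xd)) 0 xd * mx2 a b 0 d ^+ n.+1 =
  mx2 (a ^+ n - xa * a ^+ n.+1) (- (xa * b * (d ^+ n - xd * d ^+ n.+1))) 0
      (d ^+ n - xd * d ^+ n.+1).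
Proof.
move=> xa_a_corner.
rewrite !mx2_triu_expr mx2_mul mx2_sub /= !(mul0r, mulr0, addr0, add0r, subr0).
rewrite mulrDr (mulrA xa a) xa_a_corner -addrA opprD addrA subrr add0r.
by rewrite oppr0 mulrBr mulNr !mulrA.
Qed.

Hypothesis a_xa_b : a * xa * b = b.

Lemma mx2_triu_mul_core :
  mx2 a b 0 d * mx2 xa (- (xa * b * xd)) 0 xd = mx2 (a * xa) 0 0 (d * xd).
Proof.
by rewrite mx2_mul !(mul0r, mulr0, addr0, add0r) mulrN !mulrA a_xa_b addNr.
Qed.

Lemma mx2_triu_core_expr2 : a * xa ^+ 2 = xa -> d * xd ^+ 2 = xd ->
  mx2 a b 0 d * mx2 xa (- (xa * b * xd)) 0 xd ^+ 2 =
  mx2 xa (- (xa * b * xd)) 0 xd.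
Proof.
move=> a_xa2 d_xd2.
have a_xa_xa : a * xa * xa = xa by rewrite -mulrA -expr2.
have d_xd_xd : d * xd * xd = xd by rewrite -mulrA -expr2.
rewrite expr2 mulrA mx2_triu_mul_core mx2_mul !(mul0r, mulr0, addr0, add0r).
by rewrite a_xa_xa d_xd_xd mulrN !mulrA a_xa_xa.
Qed.

End TriangularCore.

Section BanachStarAlgebra.
Context {R : realType} {A : unitAlgType R[i]} {nrm : A -> R} {star : A -> A}.
Hypothesis HA : is_banach_star_algebra nrm star.

Lemma banach_nrm0 : nrm 0 = 0.
Proof.
have [[_ _ _ nrmZ] _ _ _] := HA.
by apply: complexI; have := nrmZ 0 0; rewrite scale0r normr0 mul0r.
Qed.

Lemma banach_nrmN x : nrm (- x) = nrm x.
Proof.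
have [[_ _ _ nrmZ] _ _ _] := HA.
by apply: complexI; rewrite -scaleN1r nrmZ normrN1 mul1r.
Qed.

Lemma banach_star0 : star 0 = 0.
Proof.
have [_ _ _ [starD _ _ _]] := HA.
by apply: (@addrI _ (star 0)); rewrite -starD !addr0.
Qed.

End BanachStarAlgebra.

Theorem corollary4p8 (R : realType) (A : unitAlgType R[i])
    (nrm : A -> R) (star : A -> A)
    (HA : is_banach_star_algebra nrm star)
    (a b d xa xd : A)
    (Ha : is_gcEP nrm star a xa) (Hd : is_gcEP nrm star d xd)
    (Hpi : exists ad : A, is_gDrazin a ad /\ (1 - a * ad) * b = 0) :
  is_gcEP (mxnorm nrm) (mxstar star) (mx2 a b 0 d)
    (mx2 xa (- (xa * b * xd)) 0 xd).
Proof.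
have [[nrm_ge0 nrm_eq0 _ _] nrm_mul_le _ _] := HA.
have [a_xa2 a_xa_sym root_a] := Ha; have [d_xd2 d_xd_sym root_d] := Hd.
have [ad [[ad_a_ad a_ad_comm _] pi_b]] := Hpi.
have decay_a : geometric_decay (fun n => nrm (a ^+ n - xa * a ^+ n.+1)).
  by apply/root_cvg0P.
have decay_d : geometric_decay (fun n => nrm (d ^+ n - xd * d ^+ n.+1)).
  by apply/root_cvg0P.
have xa_a_ad :=
  gcEP_mul_drazin nrm_ge0 nrm_eq0 nrm_mul_le decay_a ad_a_ad a_ad_comm.
have b_range : a * ad * b = b.
  by apply/eqP; rewrite eq_sym -subr_eq0 -[X in X - _]mul1r -mulrBl pi_b.
have a_xa_b := core_range_mulKl xa_a_ad b_range.
have corner_range n : a * ad * triu_corner a b d n = triu_corner a b d n.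
  have a_ad_a : a * ad * a = a * (a * ad) by rewrite -mulrA -a_ad_comm.
  exact: (triu_corner_fixed _ _ _ a_ad_a b_range).
have xa_a_corner n := core_range_mulK a_ad_comm xa_a_ad (corner_range n).
split.
- exact: mx2_triu_core_expr2.
- by rewrite mx2_triu_mul_core // mxstar_mx2 (banach_star0 HA) a_xa_sym d_xd_sym.
apply/root_cvg0P => [n|]; first exact: mxnorm_ge0.
apply: (@geometric_decay_le _ _ _ _ (nrm (xa * b) + 1) _ _ decay_a decay_d).
  by rewrite addr_ge0.
move=> n /=; rewrite mx2_triu_core_residual //.
apply: (le_trans (mxnorm_triu_le _ _ _ nrm_ge0 (banach_nrm0 HA))).
rewrite (banach_nrmN HA) mulrDl mul1r addrA lerD2r lerD2l.
exact: nrm_mul_le.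
Qed.
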